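(* Let $\mathcal{S}$ be a set, $\mathcal{A}$ a finite set and $\boldsymbol\varphi:\mathcal{S}\times\mathcal{A}\to\mathbb{R}^d$ with $\|\boldsymbol\varphi(s,a)\|_2\le1$ for all $(s,a)$. Fix constants $L,B,D,M>0$ and $\lambda>0$. Let $\mathcal{Q}$ be the class of functions $\mathcal{S}\times\mathcal{A}\to\mathbb{R}$ of the form $$Q(\cdot,\cdot)=\Big(\mathbf w^\top\boldsymbol\varphi(\cdot,\cdot)+v+\beta\sqrt{\boldsymbol\varphi(\cdot,\cdot)^\top\Lambda^{-1}\boldsymbol\varphi(\cdot,\cdot)}\Big)\wedge M$$ with $\|\mathbf w\|_2\le L$, $\beta\in[0,B]$, $v\in[0,D]$, and $\Lambda$ a positive definite matrix with $\lambda_{\min}(\Lambda)\ge\lambda$. Let $$\mathcal{V}=\Big\{\max_aQ(\cdot,a):\ Q(\cdot,\cdot)=\textsc{Clip}\big(Q_1(\cdot,\cdot);\,Q_2(\cdot,\cdot)\vee Q_3(\cdot,\cdot),\,Q_4(\cdot,\cdot)\wedge Q_5(\cdot,\cdot)\big),\ Q_1,\dots,Q_5\in\mathcal{Q}\Big\}.$$ Then for every $\varepsilon>0$, $$\log\mathcal{N}_\varepsilon(\mathcal{V},\|\cdot\|_\infty)\le5d\log(1+8L/\varepsilon)+5\log(1+8D/\varepsilon)+5d^2\log\big[1+8d^{1/2}B^2/(\lambda\varepsilon^2)\big].$$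
   Context: $a\vee b=\max\{a,b\}$, $a\wedge b=\min\{a,b\}$ (applied pointwise to functions), $\textsc{Clip}(x;L,U)=(x\vee L)\wedge U$. $\mathcal{N}_\varepsilon(\mathcal{F},\|\cdot\|_\infty)$ denotes the $\varepsilon$-covering number of the function class $\mathcal{F}$ with respect to the distance $\sup_x|f(x)-g(x)|$. *)

From HB Require Import structures.
From mathcomp Require Import all_boot all_order all_algebra.
From mathcomp Require Import all_classical all_reals.
From mathcomp Require Import exp.
Set Implicit Arguments. Unset Strict Implicit. Unset Printing Implicit Defensive.
Import Order.TTheory GRing.Theory Num.Theory.
Local Open Scope ring_scope.

Section Defs.
Variable R : realType.

Definition norm2 (d : nat) (x : 'cV[R]_d) : R :=
  Num.sqrt (\sum_(i < d) x i ord0 ^+ 2).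

Definition qform (d : nat) (M : 'M[R]_d) (x : 'cV[R]_d) : R :=
  ((x^T *m M *m x) ord0 ord0).

Definition posdef (d : nat) (M : 'M[R]_d) : Prop :=
  M^T = M /\ forall x : 'cV[R]_d, x != 0 -> 0 < qform M x.

Definition lambda_min_ge (d : nat) (M : 'M[R]_d) (lam : R) : Prop :=
  forall a : R, eigenvalue M a -> lam <= a.

Definition clip (x L U : R) : R := Num.min (Num.max x L) U.

Section Fun.
Variables (S : Type) (A : finType) (d : nat) (phi : S -> A -> 'cV[R]_d).

Definition Qfun (M : R) (w : 'cV[R]_d) (v beta : R) (Lam : 'M[R]_d) : S -> A -> R :=
  fun s a => Num.min ((w^T *m phi s a) ord0 ord0 + v
                      + beta * Num.sqrt (qform (invmx Lam) (phi s a))) M.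

Definition Qclass (L B D M lam : R) (Q : S -> A -> R) : Prop :=
  exists (w : 'cV[R]_d) (v beta : R) (Lam : 'M[R]_d),
    [/\ norm2 w <= L, 0 <= beta <= B, 0 <= v <= D,
        (posdef Lam /\ lambda_min_ge Lam lam)
      & Q = Qfun M w v beta Lam].

(* max over the finite nonempty set A (a0 is a witness of nonemptiness;
   the value does not depend on it) *)
Definition maxA (a0 : A) (f : A -> R) : R := \big[Num.max/f a0]_(a : A) f a.

Definition Vclass (a0 : A) (L B D M lam : R) (V : S -> R) : Prop :=
  exists Q1 Q2 Q3 Q4 Q5 : S -> A -> R,
    [/\ Qclass L B D M lam Q1, Qclass L B D M lam Q2, Qclass L B D M lam Q3,
        Qclass L B D M lam Q4 & Qclass L B D M lam Q5] /\
      V = fun s => maxA a0 (fun a =>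
               clip (Q1 s a) (Num.max (Q2 s a) (Q3 s a)) (Num.min (Q4 s a) (Q5 s a))).

End Fun.

Definition is_cover (T : Type) (F : (T -> R) -> Prop) (eps : R) (n : nat)
  (C : 'I_n -> T -> R) : Prop :=
  forall f, F f -> exists i : 'I_n, forall t, `|f t - C i t| <= eps.

(* log N_eps(F) <= b  iff  there is an eps-cover of size n with log n <= b *)
Definition log_covering_le (T : Type) (F : (T -> R) -> Prop) (eps b : R) : Prop :=
  exists (n : nat) (C : 'I_n -> T -> R), is_cover F eps C /\ ln (n%:R : R) <= b.

End Defs.

(* Every Q in the class is (w.phi + v + sqrt(phi^T G phi)) /\ M with G = beta^2 Lambda^-1,
   and these parameters range over Euclidean balls: |w| <= L, |v - D/2| <= D/2 and,
   because every eigenvalue of Lambda is at least lambda, ||G||_F <= sqrt d B^2 / lambda.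
   As |phi| <= 1, Q moves by at most |dw| + |dv| + sqrt ||dG||_F when the parameters move,
   and clip, max, min and max_a are 1-Lipschitz for the sup distance, so a product of
   nets of the three balls, used once for each of Q1, ..., Q5, is an eps-cover of V.
   For every kappa > 1 a maximal delta-packing of the r-ball in R^n is a delta-net with
   at most (1 + 2 kappa r / delta)^n points; this packing bound is proved without volumes,
   by a tensor-power trick on top of a crude grid bound. *)

From Pilot Require Import Defs.
From HB Require Import structures.
From mathcomp Require Import all_boot all_order all_algebra.
From mathcomp Require Import all_classical all_reals.
From mathcomp Require Import exp.
From mathcomp Require Import ring lra zify.
Set Implicit Arguments.
Unset Strict Implicit.
Unset Printing Implicit Defensive.
Import Order.TTheory GRing.Theory Num.Theory.
Local Open Scope ring_scope.

Lemma discriminant_le (R : realFieldType) (a b c : R) : 0 <= c ->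
  (forall t, 0 <= a + 2 * b * t + c * t ^+ 2) -> b ^+ 2 <= a * c.
Proof.
move=> c_ge0 q_ge0; have [c_gt0 | c_le0] := ltrP 0 c.
  have := q_ge0 (- b / c).
  have -> : a + 2 * b * (- b / c) + c * (- b / c) ^+ 2 = a - b ^+ 2 / c.
    by field; rewrite gt_eqF.
  by rewrite subr_ge0 ler_pdivrMr // mulrC.
have c0 : c = 0 by apply/eqP; rewrite eq_le c_le0 c_ge0.
rewrite c0 mulr0; have [-> | b_neq0] := eqVneq b 0; first by rewrite expr0n.
have := q_ge0 (- (a + 1) / (2 * b)); rewrite c0 mul0r addr0.
have -> : 2 * b * (- (a + 1) / (2 * b)) = - (a + 1).
  by field; rewrite b_neq0.
lra.
Qed.

Section Euclidean.
Variables (R : realType) (I : finType).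
Implicit Types (x y : I -> R).

Definition dotf x y : R := \sum_i x i * y i.
Definition sqnorm x : R := \sum_i x i ^+ 2.
Definition enorm x : R := Num.sqrt (sqnorm x).

Lemma sqnorm_ge0 x : 0 <= sqnorm x.
Proof. by apply: sumr_ge0 => i _; rewrite sqr_ge0. Qed.

Lemma enorm_ge0 x : 0 <= enorm x.
Proof. exact: sqrtr_ge0. Qed.

Lemma sqr_enorm x : enorm x ^+ 2 = sqnorm x.
Proof. by rewrite sqr_sqrtr // sqnorm_ge0. Qed.

Lemma enorm0 : enorm 0 = 0.
Proof. by rewrite /enorm /sqnorm big1 ?sqrtr0 // => i _; rewrite expr0n. Qed.

Lemma sqnormD x y : sqnorm (x + y) = sqnorm x + 2 * dotf x y + sqnorm y.
Proof.
rewrite /sqnorm /dotf mulr_sumr -!big_split /=; apply: eq_bigr => i _; rewrite !fctE; ring.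
Qed.

Lemma dotf_sqr_le x y : dotf x y ^+ 2 <= sqnorm x * sqnorm y.
Proof.
apply: discriminant_le; first exact: sqnorm_ge0.
move=> t; have -> : sqnorm x + 2 * dotf x y * t + sqnorm y * t ^+ 2
                    = sqnorm (x + cst t * y).
  rewrite sqnormD -mulrA; congr (_ + 2 * _ + _);
    by rewrite /dotf /sqnorm mulr_suml; apply: eq_bigr => i _; rewrite !fctE; ring.
exact: sqnorm_ge0.
Qed.

Lemma ler_dotf x y : `|dotf x y| <= enorm x * enorm y.
Proof.
rewrite -sqrtrM ?sqnorm_ge0 // -sqrtr_sqr; apply: ler_wsqrtr; exact: dotf_sqr_le.
Qed.

Lemma enormD x y : enorm (x + y) <= enorm x + enorm y.
Proof.
rewrite -(ger0_norm (addr_ge0 (enorm_ge0 x) (enorm_ge0 y))) -sqrtr_sqr.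
apply: ler_wsqrtr; rewrite sqnormD sqrrD !sqr_enorm.
have := le_trans (ler_norm _) (ler_dotf x y); lra.
Qed.

Lemma enorm_cstM t x : enorm (cst t * x) = `|t| * enorm x.
Proof.
rewrite /enorm /sqnorm -sqrtr_sqr -sqrtrM ?sqr_ge0 // mulr_sumr.
by congr Num.sqrt; apply: eq_bigr => i _ /=; rewrite exprMn.
Qed.

Lemma enormN x : enorm (- x) = enorm x.
Proof.
rewrite -[enorm x]mul1r -(normrN1 R) -enorm_cstM; congr enorm.
by apply/funext => i; rewrite !fctE; ring.
Qed.

Lemma enormB x y : enorm (x - y) <= enorm x + enorm y.
Proof. by rewrite -(enormN y) enormD. Qed.

Lemma enorm_distC x y : enorm (x - y) = enorm (y - x).
Proof. by rewrite -enormN opprB. Qed.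

Lemma lerB_enormD x y : enorm x - enorm y <= enorm (x + y).
Proof. by rewrite lerBlDr -{1}(addrK y x) -(enormN y) enormD. Qed.

Lemma ler_coord_enorm x i : `|x i| <= enorm x.
Proof.
rewrite -sqrtr_sqr; apply: ler_wsqrtr; rewrite /sqnorm (bigD1 i) //= lerDl.
by apply: sumr_ge0 => j _; rewrite sqr_ge0.
Qed.

Lemma dotfBl x y z : dotf (x - y) z = dotf x z - dotf y z.
Proof. by rewrite /dotf -sumrB; apply: eq_bigr => i _; rewrite !fctE mulrBl. Qed.

End Euclidean.

Lemma enorm_cst1 (R : realType) (c : R) : enorm (cst c : 'I_1 -> R) = `|c|.
Proof. by rewrite /enorm /sqnorm big_ord1 sqrtr_sqr. Qed.

Section GridPacking.
Variables (R : realType) (I : finType).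
Local Notation n := #|I|.

Lemma floor_shift_itv (h r z : R) (K := (Num.trunc (r / h)).+1) :
  0 < h -> `|z| <= r ->
  (0 <= Num.floor (z / h) + K%:Z)%R /\ (Num.floor (z / h) + K%:Z < (2 * K).+1%:Z)%R.
Proof.
move=> h_gt0 z_le; have r_ge0 : 0 <= r := le_trans (normr_ge0 z) z_le.
have /andP[_ rh_lt] := truncn_itv (divr_ge0 r_ge0 (ltW h_gt0)).
have /andP[zl zu] : - r <= z <= r by rewrite -ler_norml.
have lo : (- (K%:Z) <= Num.floor (z / h))%R.
  rewrite floor_ge_int rmorphN /= ler_pdivlMr // mulNr.
  by apply: le_trans zl; rewrite lerN2 -ler_pdivrMr // ltW.
have hi : (Num.floor (z / h) < K%:Z)%R.
  by rewrite floor_lt_int ltr_pdivrMr // (le_lt_trans zu) // -ltr_pdivrMr.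
by split; lia.
Qed.

Definition grid_cell (h : R) (K : nat) (x : I -> R) : {ffun I -> 'I_(2 * K).+1} :=
  [ffun i => inord (absz (Num.floor (x i / h) + K%:Z))].

Lemma grid_cell_close (h r : R) (x y : I -> R) (K := (Num.trunc (r / h)).+1) :
  0 < h -> enorm x <= r -> enorm y <= r ->
  grid_cell h K x = grid_cell h K y -> forall i, `|x i - y i| <= h.
Proof.
move=> h_gt0 xr yr /ffunP cell_eq i; have := congr1 val (cell_eq i); rewrite !ffunE.
have [x_lo x_hi] := floor_shift_itv h_gt0 (le_trans (ler_coord_enorm x i) xr).
have [y_lo y_hi] := floor_shift_itv h_gt0 (le_trans (ler_coord_enorm y i) yr).
rewrite /= !inordK -?ltz_nat ?gez0_abs // => /(congr1 Posz).
rewrite !gez0_abs // => /addIr floor_eq.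
have /andP[xl xu] := floor_itv (x i / h); have /andP[yl yu] := floor_itv (y i / h).
rewrite floor_eq intrD in xl xu; rewrite intrD in yu.
have : `|x i / h - y i / h| <= 1 by rewrite ler_norml; apply/andP; split; lra.
by rewrite -mulrBl normrM [`|h^-1|]gtr0_norm ?invr_gt0 // ler_pdivrMr // mul1r.
Qed.

Lemma card_packing_grid (T : finType) (q : T -> I -> R) (r s : R) :
  0 < s -> 0 <= r -> (forall k, enorm (q k) <= r) ->
  (forall k l, k != l -> s <= enorm (q k - q l)) ->
  #|T|%:R <= (2 * r * n.+1%:R / s + 3) ^+ n.
Proof.
move=> s_gt0 r_ge0 qr q_sep.
pose h := s / n.+1%:R; have h_gt0 : 0 < h by rewrite divr_gt0 // ltr0n.
pose K := (Num.trunc (r / h)).+1.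
have cell_inj : injective (fun k => grid_cell h K (q k)).
  move=> k l /(grid_cell_close h_gt0 (qr k) (qr l)) close.
  apply/eqP; apply: contraT => /q_sep; rewrite leNgt => /negbTE <-.
  rewrite -(gtr0_norm s_gt0) -sqrtr_sqr ltr_sqrt ?exprn_gt0 //.
  apply: (@le_lt_trans _ _ (h ^+ 2 *+ n)).
    rewrite /sqnorm -sumr_const; apply: ler_sum => i _.
    by rewrite -real_normK ?num_real // ler_sqr ?nnegrE ?normr_ge0 ?(ltW h_gt0) //; apply: close.
  rewrite /h expr_div_n -mulr_natr mulrAC ltr_pdivrMr ?exprn_gt0 ?ltr0n //.
  by rewrite ltr_pM2l ?exprn_gt0 // -natrX ltr_nat -addn1 sqrnD; lia.
have := leq_card _ cell_inj; rewrite card_ffun card_ord => card_le.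
apply: le_trans (_ : ((2 * K).+1)%:R ^+ n <= _); first by rewrite -natrX ler_nat.
rewrite lerXn2r ?nnegrE ?ler0n //.
  by rewrite addr_ge0 // divr_ge0 ?mulr_ge0 ?ler0n // ltW.
have /andP[rh_le _] := truncn_itv (divr_ge0 r_ge0 (ltW h_gt0)).
have -> : 2 * r * n.+1%:R / s = 2 * (r / h) by rewrite /h invf_div; field; rewrite gt_eqF.
rewrite /K -[(2 * _).+1]addn1 natrD natrM -addn1 natrD; lra.
Qed.

End GridPacking.

Lemma ler_bernoulli (R : realDomainType) (x : R) (j : nat) :
  0 <= x -> 1 + j%:R * x <= (1 + x) ^+ j.
Proof.
move=> x_ge0; elim: j => [|j IH]; first by rewrite mul0r addr0 expr0.
rewrite exprS -natr1 mulrDl mul1r.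
have : (1 + x) * (1 + j%:R * x) <= (1 + x) * (1 + x) ^+ j by rewrite ler_pM2l //; lra.
have : 0 <= j%:R * x by rewrite mulr_ge0 ?ler0n.
nra.
Qed.

Lemma ler_of_pow_bound (R : realType) (x c K : R) : 0 < c ->
  (forall j, x ^+ j.+1 <= c ^+ j * K) -> x <= c.
Proof.
move=> c_gt0 xK; rewrite leNgt; apply/negP => c_lt_x.
have x_gt0 : 0 < x := lt_trans c_gt0 c_lt_x.
pose q := x / c; have q_gt1 : 1 < q by rewrite ltr_pdivlMr // mul1r.
have growth j : x * (1 + j%:R * (q - 1)) <= K.
  apply: le_trans (_ : x * q ^+ j <= K).
    by rewrite ler_pM2l // -{2}[q](subrKC 1) ler_bernoulli // subr_ge0 ltW.
  have -> : x * q ^+ j = x ^+ j.+1 / c ^+ j by rewrite /q exprMn exprVn exprS mulrA.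
  by rewrite ler_pdivrMr ?exprn_gt0 // mulrC.
have K_ge0 : 0 <= K by have := growth 0%N; rewrite mul0r addr0 mulr1 => /(le_trans (ltW x_gt0)).
have xq_gt0 : 0 < x * (q - 1) by rewrite mulr_gt0 // subr_gt0.
have /andP[_ j_gt] := truncn_itv (divr_ge0 K_ge0 (ltW xq_gt0)).
have := growth (Num.trunc (K / (x * (q - 1)))).+1.
rewrite ltr_pdivrMr // in j_gt; lra.
Qed.

Lemma ln_le_of_le_pow (R : realType) (N k : nat) (x : R) :
  1 <= x -> (0 < N)%N -> N%:R <= x ^+ k -> ln (N%:R : R) <= k%:R * ln x.
Proof.
move=> x_ge1 N_gt0 N_le; have x_gt0 : 0 < x := lt_le_trans ltr01 x_ge1.
by rewrite mulr_natl -lnXn // ler_ln // posrE ?ltr0n // exprn_gt0.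
Qed.

Section GeometricSums.
Variables (R : realType) (I : finType) (N : nat) (p : 'I_N -> I -> R) (t : R).
Hypothesis t_gt0 : 0 < t.

Fixpoint geomsum (s : seq 'I_N) : I -> R :=
  if s is k :: s' then p k + cst t * geomsum s' else 0.

Lemma geomsum_consB k k' s s' : geomsum (k :: s) - geomsum (k' :: s') =
  (p k - p k') + cst t * (geomsum s - geomsum s').
Proof. by apply/funext => i /=; rewrite !fctE; ring. Qed.

Lemma enorm_geomsum_le (r rho : R) : 0 <= rho -> r + t * rho <= rho ->
  (forall k, enorm (p k) <= r) -> forall s, enorm (geomsum s) <= rho.
Proof.
move=> rho_ge0 rho_fix pr; elim=> [|k s IH] /=; first by rewrite enorm0.
apply: le_trans (enormD _ _) (le_trans _ rho_fix).
by rewrite enorm_cstM gtr0_norm // lerD // ler_pM2l.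
Qed.

Lemma geomsum_sep (delta gamma rho : R) : t <= 1 -> 0 <= gamma ->
  gamma + 2 * t * rho <= delta ->
  (forall s, enorm (geomsum s) <= rho) ->
  (forall k l, k != l -> delta <= enorm (p k - p l)) ->
  forall j s s', size s = j.+1 -> size s' = j.+1 -> s != s' ->
    t ^+ j * gamma <= enorm (geomsum s - geomsum s').
Proof.
move=> t_le1 gamma_ge0 gamma_le rho_bound p_sep.
have heads_differ k k' s s' : k != k' ->
    gamma <= enorm (geomsum (k :: s) - geomsum (k' :: s')).
  move=> /p_sep kk'; rewrite geomsum_consB; apply: le_trans (lerB_enormD _ _).
  have : enorm (geomsum s - geomsum s') <= rho + rho.
    exact: le_trans (enormB _ _) (lerD (rho_bound s) (rho_bound s')).
  rewrite enorm_cstM gtr0_norm // -(ler_pM2l t_gt0); lra.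
elim=> [|j IH] [|k s] [|k' s'] //= [size_s] [size_s'] neq.
  move: s s' size_s size_s' neq => [|//] [|//] _ _; rewrite eqseq_cons andbT.
  by rewrite expr0 mul1r; apply: (heads_differ _ _ [::] [::]).
case: (eqVneq k k') neq => [<- | kk' _]; last first.
  apply: le_trans (heads_differ _ _ s s' kk').
  by rewrite ler_piMl // exprn_ile1 // ltW.
rewrite eqseq_cons eqxx /= => neq.
rewrite geomsum_consB subrr add0r enorm_cstM gtr0_norm // exprS -mulrA ler_pM2l //.
exact: IH.
Qed.

End GeometricSums.

Section Nets.
Variables (R : realType) (I : finType).
Local Notation n := #|I|.

(* The geometric sums over the N^(j+1) index sequences of length j+1, with ratio t = 1/b,
   form a (t^j gamma)-packing of a fixed ball, so the grid bound gives
   N^(j+1) <= (b^n)^j K^n; letting j grow leaves N <= b^n. *)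
Lemma card_packing_le (N : nat) (p : 'I_N -> I -> R) (r delta kappa : R) :
  0 < r -> 0 < delta -> 1 < kappa -> (forall k, enorm (p k) <= r) ->
  (forall k l, k != l -> delta <= enorm (p k - p l)) ->
  N%:R <= (1 + 2 * kappa * r / delta) ^+ n.
Proof.
move=> r_gt0 delta_gt0 kappa_gt1 p_r p_sep.
have kappa_gt0 : 0 < kappa by lra.
set b := 1 + 2 * kappa * r / delta.
have b_gt1 : 1 < b by rewrite ltrDl divr_gt0 // !mulr_gt0.
have b_gt0 : 0 < b := lt_trans ltr01 b_gt1.
pose t := b^-1; pose rho := r + delta / (2 * kappa); pose gamma := delta - delta / kappa.
have t_gt0 : 0 < t by rewrite invr_gt0; lra.
have t_le1 : t <= 1 by rewrite invf_le1; lra.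
have t_rho : t * rho = delta / (2 * kappa).
  by rewrite /t /rho /b; field; rewrite !gt_eqF // addr_gt0 // !mulr_gt0.
have rho_ge0 : 0 <= rho by rewrite addr_ge0 ?divr_ge0 ?mulr_ge0 // ltW.
have diam_ge0 : 0 <= 2 * rho * n.+1%:R by rewrite !mulr_ge0.
have gamma_gt0 : 0 < gamma by rewrite subr_gt0 gtr_pMr // invf_lt1.
have rho_bound : forall s, enorm (geomsum p t s) <= rho.
  by apply: enorm_geomsum_le p_r => //; rewrite t_rho.
have gamma_rho : gamma + 2 * t * rho <= delta.
  by rewrite -mulrA t_rho [X in X <= _](_ : _ = delta) // /gamma; field; rewrite gt_eqF.
have sep := geomsum_sep t_gt0 t_le1 (ltW gamma_gt0) gamma_rho rho_bound p_sep.
pose K := 2 * rho * n.+1%:R / gamma + 3.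
have K_ge0 : 0 <= K by rewrite addr_ge0 // divr_ge0 // ltW.
apply: (ler_of_pow_bound (K := K ^+ n)); first by rewrite exprn_gt0 //; lra.
move=> j; rewrite -natrX -exprM mulnC exprM -exprMn.
have sj_gt0 : 0 < t ^+ j * gamma by rewrite mulr_gt0 // exprn_gt0.
have := @card_packing_grid R I _ (fun u : (j.+1).-tuple 'I_N => geomsum p t u) rho
  (t ^+ j * gamma).
rewrite card_tuple card_ord natrX => /(_ sj_gt0 rho_ge0 (fun u => rho_bound u)) grid.
apply: le_trans (grid _) _ => [u u' uu'|]; first exact: sep (size_tuple u) (size_tuple u') uu'.
have b_j : 1 <= b ^+ j by rewrite exprn_ege1 // ltW.
apply: lerXn2r; rewrite ?nnegrE.
- by rewrite addr_ge0 // divr_ge0 // ltW.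
- by rewrite mulr_ge0 //; lra.
have -> : 2 * rho * n.+1%:R / (t ^+ j * gamma) = b ^+ j * (2 * rho * n.+1%:R / gamma).
  by rewrite /t exprVn; field; rewrite gt_eqF // expf_neq0 // gt_eqF.
rewrite /K mulrDr; have : 0 <= 2 * rho * n.+1%:R / gamma by rewrite divr_ge0 // ltW.
nra.
Qed.

Definition is_net (r delta : R) (N : nat) (c : 'I_N -> I -> R) :=
  forall x, enorm x <= r -> exists k, enorm (x - c k) <= delta.

Lemma exists_net (r delta kappa : R) : 0 <= r -> 0 < delta -> 1 < kappa ->
  exists N (c : 'I_N -> I -> R),
    [/\ (0 < N)%N, N%:R <= (1 + 2 * kappa * r / delta) ^+ n & is_net r delta c].
Proof.
move=> r_ge0 delta_gt0 kappa_gt1.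
have [r0 | r_neq0] := eqVneq r 0.
  exists 1%N, (fun _ => 0); split=> //; first by rewrite r0 mulr0 mul0r addr0 expr1n.
  by move=> x; rewrite subr0 r0 => x0; exists ord0; apply: le_trans x0 (ltW _).
have r_gt0 : 0 < r by rewrite lt_def r_neq0.
pose packing N := exists p : 'I_N -> I -> R,
  (forall k, enorm (p k) <= r) /\ (forall k l, k != l -> delta < enorm (p k - p l)).
have packing1 : packing 1%N.
  by exists (fun _ => 0); split=> [k | k l]; [rewrite enorm0 | rewrite !ord1 eqxx].
have packing_le N : `[< packing N >] -> (N <= Num.trunc ((1 + 2 * kappa * r / delta) ^+ n))%N.
  move=> /asboolP [p [p_r p_sep]]; rewrite truncn_ge_nat; last first.
    by rewrite exprn_ge0 // addr_ge0 // divr_ge0 ?mulr_ge0 //; lra.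
  by apply: card_packing_le p_r _ => // k l /p_sep /ltW.
have [N /asboolP [p [p_r p_sep]] N_max] := ex_maxnP (ex_intro _ 1%N (asboolT packing1)) packing_le.
exists N, p; split.
- by apply: N_max; apply/asboolP.
- by apply: card_packing_le p_r _ => // k l /p_sep /ltW.
move=> x x_r; case: (pselect (exists k, enorm (x - p k) <= delta)) => // no_close.
have far k : delta < enorm (x - p k).
  by rewrite ltNge; apply/negP => close; apply: no_close; exists k.
have /N_max : `[< packing N.+1 >].
  apply/asboolP; exists (fun k => if unlift ord_max k is Some k' then p k' else x).
  split=> [k | k l]; first by case: (unliftP ord_max k).
  case: (unliftP ord_max k) => [k'|] ->; case: (unliftP ord_max l) => [l'|] -> //.
  - by move=> kl; apply: p_sep; apply: contra kl => /eqP ->.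
  - by rewrite enorm_distC.
  - by rewrite eqxx.
by rewrite ltnn.
Qed.

Lemma exists_net_ln (r delta kappa : R) : 0 <= r -> 0 < delta -> 1 < kappa ->
  exists N (c : 'I_N -> I -> R), [/\ (0 < N)%N,
    ln (N%:R : R) <= n%:R * ln (1 + 2 * kappa * r / delta) & is_net r delta c].
Proof.
move=> r_ge0 delta_gt0 kappa_gt1.
have [N [c [N_gt0 N_le c_net]]] := exists_net r_ge0 delta_gt0 kappa_gt1.
exists N, c; split => //; apply: ln_le_of_le_pow N_le => //.
have kappa_gt0 : 0 < kappa := lt_trans ltr01 kappa_gt1.
by rewrite lerDl divr_ge0 ?mulr_ge0 // ltW.
Qed.

End Nets.

Section OuterProduct.
Variables (R : realType) (I : finType).

Definition outerf (x : I -> R) : I * I -> R := fun ij => x ij.1 * x ij.2.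

Lemma enorm_outerf (x : I -> R) : enorm (outerf x) = sqnorm x.
Proof.
rewrite /enorm; have -> : sqnorm (outerf x) = sqnorm x ^+ 2.
  rewrite /sqnorm expr2 mulr_suml -(pair_bigA _ (fun i j => (x i * x j) ^+ 2)) /=.
  by apply: eq_bigr => i _; rewrite mulr_sumr; apply: eq_bigr => j _; rewrite exprMn.
by rewrite sqrtr_sqr ger0_norm // sqnorm_ge0.
Qed.

End OuterProduct.

Section QuadraticForms.
Variables (R : realType) (d : nat).
Implicit Types (x y z : 'cV[R]_d) (M : 'M[R]_d).

Definition colf x : 'I_d -> R := fun i => x i ord0.
Definition mxf M : 'I_d * 'I_d -> R := fun ij => M ij.1 ij.2.
Definition bform M x y : R := (x^T *m M *m y) ord0 ord0.

Lemma mulmx_dotf (u v : 'cV[R]_d) : (u^T *m v) ord0 ord0 = dotf (colf u) (colf v).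
Proof. by rewrite !mxE; apply: eq_bigr => i _; rewrite !mxE. Qed.

Lemma bform_dotf M x : bform M x x = dotf (mxf M) (outerf (colf x)).
Proof.
rewrite /bform /dotf mxE -(pair_bigA _ (fun i j => M i j * (x i ord0 * x j ord0))) /=.
rewrite exchange_big; apply: eq_bigr => j _; rewrite !mxE mulr_suml.
by apply: eq_bigr => i _; rewrite !mxE /colf; ring.
Qed.

Lemma bform_sym M x y : M^T = M -> bform M x y = bform M y x.
Proof.
move=> M_sym; rewrite /bform -[in LHS]M_sym.
have -> : x^T *m M^T *m y = (y^T *m M *m x)^T by rewrite !trmx_mul trmxK mulmxA.
by rewrite mxE.
Qed.

Lemma bformDl M x y z : bform M (x + y) z = bform M x z + bform M y z.
Proof. by rewrite /bform linearD /= !mulmxDl mxE. Qed.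

Lemma bformDr M x y z : bform M z (x + y) = bform M z x + bform M z y.
Proof. by rewrite /bform mulmxDr mxE. Qed.

Lemma bformZl M t x y : bform M (t *: x) y = t * bform M x y.
Proof. by rewrite /bform linearZ /= -!scalemxAl mxE. Qed.

Lemma bformZr M t x y : bform M x (t *: y) = t * bform M x y.
Proof. by rewrite /bform -!scalemxAr mxE. Qed.

Lemma psd_bform_sqr_le M x y : M^T = M -> (forall z, 0 <= bform M z z) ->
  bform M x y ^+ 2 <= bform M x x * bform M y y.
Proof.
move=> M_sym M_psd; apply: discriminant_le => // t; have := M_psd (x + t *: y).
by rewrite bformDl !bformDr !bformZl !bformZr (bform_sym y x M_sym) => q; nra.
Qed.

Lemma bform_scalel M t x y : bform (t *: M) x y = t * bform M x y.
Proof. by rewrite /bform -scalemxAr -scalemxAl mxE. Qed.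

Lemma bform_le_frob M x : `|bform M x x| <= enorm (mxf M) * sqnorm (colf x).
Proof. by rewrite bform_dotf -enorm_outerf; apply: ler_dotf. Qed.

Lemma sqnorm_mulmx_le M y : sqnorm (colf (M *m y)) <= enorm (mxf M) ^+ 2 * sqnorm (colf y).
Proof.
rewrite sqr_enorm /sqnorm /mxf -(pair_bigA _ (fun i j => M (i, j).1 (i, j).2 ^+ 2)) /=.
rewrite mulr_suml; apply: ler_sum => i _; rewrite /colf mxE.
exact: (dotf_sqr_le (fun j => M i j) (colf y)).
Qed.

Lemma sqnorm_colf0 : sqnorm (colf 0) = 0.
Proof. by rewrite /sqnorm big1 // => i _; rewrite /colf mxE expr0n. Qed.

Lemma sqnorm_colf_gt0 x : x != 0 -> 0 < sqnorm (colf x).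
Proof.
move=> x_neq0; rewrite lt_def sqnorm_ge0 andbT; apply: contra x_neq0.
rewrite psumr_eq0 => [/allP x0|i _]; last exact: sqr_ge0.
apply/eqP/matrixP => i j; rewrite (ord1 j) mxE.
by apply/eqP; rewrite -sqrf_eq0; apply: x0; rewrite mem_index_enum.
Qed.

Lemma psd_sqnorm_mulmx_le M z K : M^T = M -> (forall y, 0 <= bform M y y) -> 0 <= K ->
  bform M (M *m z) (M *m z) <= K * sqnorm (colf (M *m z)) ->
  sqnorm (colf (M *m z)) <= K * bform M z z.
Proof.
move=> M_sym M_psd K_ge0 MMz_le; set S := sqnorm (colf (M *m z)) in MMz_le *.
have [S_gt0 | S_le0] := ltrP 0 S; last exact: le_trans S_le0 (mulr_ge0 K_ge0 (M_psd z)).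
have := psd_bform_sqr_le (M *m z) z M_sym M_psd.
rewrite [bform M (M *m z) z](_ : _ = S); last by rewrite /bform -mulmxA mulmx_dotf.
have := M_psd z; have := M_psd (M *m z); nra.
Qed.

Lemma psd_frob_le M c : M^T = M -> (forall z, 0 <= bform M z z) ->
  (forall z, bform M z z <= c * sqnorm (colf z)) -> 0 <= c ->
  enorm (mxf M) <= Num.sqrt d%:R * c.
Proof.
move=> M_sym M_psd M_le c_ge0.
have col_le j : sqnorm (colf (M *m delta_mx j ord0)) <= c ^+ 2.
  set e : 'cV[R]_d := delta_mx j ord0.
  have e_unit : sqnorm (colf e) = 1.
    rewrite /sqnorm (bigD1 j) //= big1 ?addr0 => [|i /negbTE ij]; rewrite /colf mxE.
      by rewrite !eqxx expr1n.
    by rewrite ij expr0n.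
  apply: le_trans (psd_sqnorm_mulmx_le M_sym M_psd c_ge0 (M_le _)) _.
  by rewrite expr2 ler_wpM2l // -[c]mulr1 -e_unit M_le.
have col_sum j : \sum_i M i j ^+ 2 = sqnorm (colf (M *m delta_mx j ord0)).
  by rewrite -colE; apply: eq_bigr => i _; rewrite /colf !mxE.
have : sqnorm (mxf M) <= c ^+ 2 *+ d.
  rewrite /sqnorm /mxf -(pair_bigA _ (fun i j => M (i, j).1 (i, j).2 ^+ 2)) /= exchange_big.
  rewrite -[in X in _ <= X](card_ord d) -sumr_const; apply: ler_sum => j _.
  by rewrite col_sum col_le.
move=> sq_le; rewrite /enorm -(ger0_norm c_ge0) -sqrtr_sqr -sqrtrM ?ler0n // mulr_natl.
exact: ler_wsqrtr.
Qed.

Lemma psd_unitmx_coercive M : M^T = M -> (forall z, 0 <= bform M z z) -> M \in unitmx ->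
  exists2 K, 0 <= K & forall z, sqnorm (colf z) <= K * bform M z z.
Proof.
move=> M_sym M_psd M_unit; have normM_ge0 := enorm_ge0 (mxf M).
exists (enorm (mxf (invmx M)) ^+ 2 * enorm (mxf M)) => [|z].
  by rewrite mulr_ge0 ?exprn_ge0 ?enorm_ge0.
apply: le_trans (_ : _ <= enorm (mxf (invmx M)) ^+ 2 * sqnorm (colf (M *m z))) _.
  by have := sqnorm_mulmx_le (invmx M) (M *m z); rewrite mulKmx.
rewrite -[X in _ <= X]mulrA; apply: ler_wpM2l; first by rewrite exprn_ge0 ?enorm_ge0.
apply: psd_sqnorm_mulmx_le => //; exact: le_trans (ler_norm _) (bform_le_frob _ _).
Qed.

End QuadraticForms.

Section PositiveDefinite.
Variables (R : realType) (d : nat).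
Implicit Types (x y z : 'cV[R]_d) (M : 'M[R]_d).

Lemma qformE M x : qform M x = bform M x x.
Proof. by []. Qed.

Lemma posdef_qform_ge0 M x : posdef M -> 0 <= qform M x.
Proof.
move=> [_ M_pos]; have [-> | x_neq0] := eqVneq x 0; last exact/ltW/M_pos.
by rewrite /qform mulmx0 mxE.
Qed.

Lemma posdef_unitmx M : posdef M -> M \in unitmx.
Proof.
move=> [_ M_pos]; rewrite unitmxE unitfE; apply/negP => /det0P [v v_neq0 vM].
by have := M_pos v^T; rewrite trmx_eq0 /qform trmxK vM mul0mx mxE ltxx => /(_ v_neq0).
Qed.

Lemma posdef_rayleigh_eigenvalue M z : posdef M -> z != 0 ->
  exists2 m, eigenvalue M m & forall y, m * sqnorm (colf y) <= qform M y.
Proof.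
move=> M_pd z_neq0; have [M_sym M_pos] := M_pd.
pose E : set R :=
  ((fun y => qform M y / sqnorm (colf y)) @` [set y : 'cV[R]_d | y != 0])%classic.
have E_ne : (E !=set0)%classic by exists (qform M z / sqnorm (colf z)), z.
have E_lb0 : lbound E 0.
  by move=> _ [y y_neq0 <-]; rewrite divr_ge0 ?posdef_qform_ge0 ?sqnorm_ge0.
have E_lb : has_lbound E by exists 0.
set m := inf E.
have m_le y : m * sqnorm (colf y) <= qform M y.
  have [-> | y_neq0] := eqVneq y 0.
    by rewrite /qform mulmx0 mxE sqnorm_colf0 mulr0.
  by rewrite -ler_pdivlMr ?sqnorm_colf_gt0 //; apply: ge_inf => //; exists y.
exists m => //.
pose S := M - m%:M.
have S_sym : S^T = S by rewrite /S linearB /= tr_scalar_mx M_sym.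
have bform_S y : bform S y y = qform M y - m * sqnorm (colf y).
  rewrite /bform /S mulmxBr mulmxBl mul_mx_scalar -scalemxAl.
  by rewrite mxE [X in _ + X]mxE [X in - X]mxE mulmx_dotf.
have S_psd y : 0 <= bform S y y by rewrite bform_S subr_ge0.
(* m is the infimum of the Rayleigh quotient; an invertible S would be coercive and give
   the larger lower bound m + 1/(K+1). *)
have : S \notin unitmx.
  apply/negP => /(psd_unitmx_coercive S_sym S_psd) [K K_ge0 S_coer].
  have : m + (K + 1)^-1 <= m.
    apply: lb_le_inf => // _ [y y_neq0 <-].
    have y_gt0 := sqnorm_colf_gt0 y_neq0.
    have := S_coer y; have := S_psd y; rewrite bform_S => S_ge0 S_le.
    have : sqnorm (colf y) / (K + 1) <= qform M y - m * sqnorm (colf y).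
      by rewrite ler_pdivrMr; nra.
    rewrite ler_pdivlMr //; lra.
  have : 0 < (K + 1)^-1 by rewrite invr_gt0; lra.
  lra.
rewrite unitmxE unitfE negbK => /det0P [v v_neq0 vS].
apply/eigenvalueP; exists v => //; apply/eqP.
by rewrite -subr_eq0 -mul_mx_scalar -mulmxBr; apply/eqP.
Qed.

Lemma qform_ge_lambda_min M lam : posdef M -> lambda_min_ge M lam ->
  forall z, lam * sqnorm (colf z) <= qform M z.
Proof.
move=> M_pd M_lam z; have [-> | z_neq0] := eqVneq z 0.
  by rewrite /qform mulmx0 mxE sqnorm_colf0 mulr0.
have [m /M_lam lam_le_m m_le] := posdef_rayleigh_eigenvalue M_pd z_neq0.
by apply: le_trans (m_le z); rewrite ler_wpM2r ?sqnorm_ge0.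
Qed.

Lemma qform_invmxE M x : posdef M -> qform (invmx M) x = qform M (invmx M *m x).
Proof.
move=> M_pd; have [M_sym _] := M_pd.
rewrite /qform trmx_mul trmx_inv M_sym !mulmxA -[_ *m M *m _]mulmxA.
by rewrite mulmxV ?posdef_unitmx // mulmx1.
Qed.

Lemma qform_invmx_le M lam x : 0 < lam -> posdef M -> lambda_min_ge M lam ->
  qform (invmx M) x <= sqnorm (colf x) / lam.
Proof.
move=> lam_gt0 M_pd M_lam; rewrite qform_invmxE //; set y := invmx M *m x.
have q_dot : qform M y = dotf (colf y) (colf x).
  by rewrite /qform -mulmxA mulKVmx ?posdef_unitmx // mulmx_dotf.
have := dotf_sqr_le (colf y) (colf x); rewrite -q_dot => cs.
have := qform_ge_lambda_min M_pd M_lam y; have := sqnorm_ge0 (colf x).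
set q := qform M y; set X := sqnorm (colf x); set Y := sqnorm (colf y) => X_ge0 q_ge.
have key : lam * q ^+ 2 <= q * X.
  apply: le_trans (_ : lam * (Y * X) <= _); first by rewrite ler_pM2l.
  by rewrite mulrA ler_wpM2r.
rewrite ler_pdivlMr //; have [q_gt0 | q_le0] := ltrP 0 q; last by nra.
by rewrite -(ler_pM2l q_gt0); nra.
Qed.

Lemma frob_scaled_invmx_le M lam beta B : 0 < lam -> posdef M -> lambda_min_ge M lam ->
  0 <= beta <= B -> enorm (mxf (beta ^+ 2 *: invmx M)) <= Num.sqrt d%:R * (B ^+ 2 / lam).
Proof.
move=> lam_gt0 M_pd M_lam /andP[beta_ge0 beta_le]; have [M_sym _] := M_pd.
have beta2_le : beta ^+ 2 <= B ^+ 2 by rewrite lerXn2r ?nnegrE // (le_trans beta_ge0).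
have C_ge0 z : 0 <= bform (invmx M) z z by rewrite -qformE qform_invmxE ?posdef_qform_ge0.
apply: psd_frob_le.
- by rewrite linearZ /= trmx_inv M_sym.
- by move=> z; rewrite bform_scalel mulr_ge0 ?sqr_ge0.
- move=> z; rewrite bform_scalel [X in _ <= X]mulrAC -[X in _ <= X]mulrA.
  by apply: ler_pM; rewrite ?sqr_ge0 ?C_ge0 // -qformE qform_invmx_le.
- by rewrite divr_ge0 ?sqr_ge0 // ltW.
Qed.

End PositiveDefinite.

Section SupDistance.
Variable R : realType.

Lemma ler_dist_add (u v e : R) : `|u - v| <= e -> u <= v + e /\ v <= u + e.
Proof. by rewrite ler_distl lerBlDr => /andP[]. Qed.

Lemma ler_dist_of_add (u v e : R) : u <= v + e -> v <= u + e -> `|u - v| <= e.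
Proof. by rewrite ler_distl lerBlDr => -> ->. Qed.

Lemma clip_le_add (x1 x2 x3 x4 x5 y1 y2 y3 y4 y5 e : R) :
  x1 <= y1 + e -> x2 <= y2 + e -> x3 <= y3 + e -> x4 <= y4 + e -> x5 <= y5 + e ->
  clip x1 (Num.max x2 x3) (Num.min x4 x5) <= clip y1 (Num.max y2 y3) (Num.min y4 y5) + e.
Proof.
move=> h1 h2 h3 h4 h5; rewrite /clip !(addr_minl, addr_maxl).
by apply: le_min2; [apply: le_max2 => //; apply: le_max2 | apply: le_min2].
Qed.

Lemma ler_dist_clip (x1 x2 x3 x4 x5 y1 y2 y3 y4 y5 e : R) :
  `|x1 - y1| <= e -> `|x2 - y2| <= e -> `|x3 - y3| <= e -> `|x4 - y4| <= e ->
  `|x5 - y5| <= e ->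
  `|clip x1 (Num.max x2 x3) (Num.min x4 x5) - clip y1 (Num.max y2 y3) (Num.min y4 y5)| <= e.
Proof.
move=> /ler_dist_add[l1 r1] /ler_dist_add[l2 r2] /ler_dist_add[l3 r3] /ler_dist_add[l4 r4].
by move=> /ler_dist_add[l5 r5]; apply: ler_dist_of_add; apply: clip_le_add.
Qed.

Lemma ler_dist_minl (x y m e : R) : `|x - y| <= e -> `|Num.min x m - Num.min y m| <= e.
Proof.
move=> xy; have e_ge0 : 0 <= e := le_trans (normr_ge0 _) xy.
have [l r] := ler_dist_add xy.
by apply: ler_dist_of_add; rewrite addr_minl; apply: le_min2; rewrite ?lerDl.
Qed.

Lemma maxA_le_add (A : finType) (a0 : A) (f g : A -> R) e :
  (forall a, f a <= g a + e) -> Defs.maxA a0 f <= Defs.maxA a0 g + e.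
Proof.
move=> fg; have g_le a : g a <= Defs.maxA a0 g := le_bigmax _ g a.
by apply: bigmax_le => [|a _]; apply: le_trans (fg _) _; rewrite lerD2r g_le.
Qed.

Lemma ler_dist_maxA (A : finType) (a0 : A) (f g : A -> R) e :
  (forall a, `|f a - g a| <= e) -> `|Defs.maxA a0 f - Defs.maxA a0 g| <= e.
Proof.
by move=> fg; apply: ler_dist_of_add; apply: maxA_le_add => a; have [] := ler_dist_add (fg a).
Qed.

Lemma ler_sqrtD (a b : R) : 0 <= a -> 0 <= b -> Num.sqrt (a + b) <= Num.sqrt a + Num.sqrt b.
Proof.
move=> a_ge0 b_ge0; rewrite -ler_sqr ?nnegrE ?addr_ge0 ?sqrtr_ge0 //.
rewrite sqrrD !sqr_sqrtr ?addr_ge0 //.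
have : 0 <= Num.sqrt a * Num.sqrt b *+ 2 by rewrite mulrn_wge0 // mulr_ge0 ?sqrtr_ge0.
lra.
Qed.

Lemma ler_dist_sqrt (a b : R) : `|Num.sqrt a - Num.sqrt b| <= Num.sqrt `|a - b|.
Proof.
wlog ba : a b / b <= a.
  move=> wlog_ba; case: (leP b a) => [/wlog_ba // | /ltW /wlog_ba].
  by rewrite distrC [`|b - a|]distrC.
have sqrt_ba : Num.sqrt b <= Num.sqrt a := ler_wsqrtr ba.
rewrite !ger0_norm ?subr_ge0 // lerBlDl.
have [b_le0 | b_gt0] := lerP b 0.
  by rewrite (ler0_sqrtr b_le0) add0r; apply: ler_wsqrtr; lra.
by rewrite -{1}(subrKC b a) ler_sqrtD ?subr_ge0 // ltW.
Qed.

End SupDistance.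

Section Covering.
Variables (R : realType) (S : Type) (A : finType) (d : nat) (phi : S -> A -> 'cV[R]_d).
Hypothesis phi_le1 : forall s a, norm2 (phi s a) <= 1.
Variables (L B D M lam : R).
Hypothesis lam_gt0 : 0 < lam.
Local Notation Qclass := (Qclass phi L B D M lam).
Local Notation rG := (Num.sqrt d%:R * (B ^+ 2 / lam)).

(* G stands for beta^2 Lambda^-1: the bonus beta sqrt(phi^T Lambda^-1 phi) becomes
   sqrt(phi^T G phi), which is Lipschitz in G for the Frobenius norm. *)
Definition Qparam (w : 'I_d -> R) (v : R) (G : 'I_d * 'I_d -> R) : S -> A -> R :=
  fun s a => Num.min (dotf w (colf (phi s a)) + v
                      + Num.sqrt (dotf G (outerf (colf (phi s a))))) M.

Lemma Qclass_param Q : Qclass Q ->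
  exists w v G, [/\ enorm w <= L, `|v - D / 2| <= D / 2, enorm G <= rG & Q = Qparam w v G].
Proof.
case=> w [v [beta [Lam [w_le beta_itv /andP[v_ge0 v_le] [Lam_pd Lam_lam] ->]]]].
have /andP[beta_ge0 _] := beta_itv.
exists (colf w), v, (mxf (beta ^+ 2 *: invmx Lam)); split => //.
- by rewrite ler_norml; apply/andP; split; lra.
- exact: frob_scaled_invmx_le.
apply/funext => s; apply/funext => a; rewrite /Qfun /Qparam -bform_dotf bform_scalel.
by rewrite sqrtrM ?sqr_ge0 // sqrtr_sqr ger0_norm // mulmx_dotf.
Qed.

Lemma ler_dist_Qparam w v G w' v' G' s a :
  `|Qparam w v G s a - Qparam w' v' G' s a|
    <= enorm (w - w') + `|v - v'| + Num.sqrt (enorm (G - G')).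
Proof.
apply: ler_dist_minl; set x := colf (phi s a).
have x_le1 : enorm x <= 1 := phi_le1 s a.
have sqx_le1 : sqnorm x <= 1 by rewrite -sqr_enorm expr_le1 ?enorm_ge0.
have lin : `|dotf w x - dotf w' x| <= enorm (w - w').
  rewrite -dotfBl; apply: le_trans (ler_dotf _ _) _.
  by rewrite ler_piMr ?enorm_ge0.
have quad : `|Num.sqrt (dotf G (outerf x)) - Num.sqrt (dotf G' (outerf x))|
            <= Num.sqrt (enorm (G - G')).
  apply: le_trans (ler_dist_sqrt _ _) _; apply: ler_wsqrtr.
  rewrite -dotfBl; apply: le_trans (ler_dotf _ _) _.
  by rewrite enorm_outerf ler_piMr ?enorm_ge0.
have [l1 r1] := ler_dist_add lin; have [l3 r3] := ler_dist_add quad.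
have [l2 r2] := ler_dist_add (lexx `|v - v'|).
by apply: ler_dist_of_add; lra.
Qed.

Lemma Qclass_cover_of_nets (Nw Nv NG : nat) (cw : 'I_Nw -> 'I_d -> R)
    (cv : 'I_Nv -> 'I_1 -> R) (cG : 'I_NG -> 'I_d * 'I_d -> R) (dw dv dG eps : R) :
  is_net L dw cw -> is_net (D / 2) dv cv -> is_net rG dG cG ->
  dw + dv + Num.sqrt dG <= eps ->
  forall Q, Qclass Q -> exists k : 'I_Nw * 'I_Nv * 'I_NG,
    forall s a, `|Q s a - Qparam (cw k.1.1) (D / 2 + cv k.1.2 ord0) (cG k.2) s a| <= eps.
Proof.
move=> net_w net_v net_G err_le Q /Qclass_param [w [v [G [w_le v_le G_le ->]]]].
have [kw kw_close] := net_w w w_le.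
have [kv kv_close] : exists k, enorm (cst (v - D / 2) - cv k) <= dv.
  by apply: net_v; rewrite enorm_cst1.
have [kG kG_close] := net_G G G_le.
exists (kw, kv, kG) => s a /=; apply: le_trans (ler_dist_Qparam _ _ _ _ _ _ s a) _.
apply: le_trans err_le; apply: lerD; [apply: lerD => // | exact: ler_wsqrtr].
by rewrite opprD addrA; apply: le_trans (ler_coord_enorm _ ord0) kv_close.
Qed.

Lemma Qclass_cover eps : 0 <= L -> 0 <= D -> 0 < eps ->
  exists n (C : 'I_n -> S -> A -> R), [/\ (0 < n)%N,
    forall Q, Qclass Q -> exists i, forall s a, `|Q s a - C i s a| <= eps &
    ln (n%:R : R) <= d%:R * ln (1 + 8 * L / eps) + ln (1 + 8 * D / eps)
      + (d ^ 2)%:R * ln (1 + 8 * Num.sqrt d%:R * B ^+ 2 / (lam * eps ^+ 2))].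
Proof.
move=> L_ge0 D_ge0 eps_gt0.
(* kappa = (17/16)^2 makes sqrt dG = 17 eps / 32, so that the three errors add up to less
   than eps, while 2 kappa r / delta yields exactly 8 L / eps, 8 D / eps and
   8 sqrt d B^2 / (lambda eps^2). *)
pose kappa : R := 289%:R / 256%:R.
have kappa_gt1 : 1 < kappa by rewrite ltr_pdivlMr ?ltr0n // mul1r ltr_nat.
have kappa_gt0 : 0 < kappa := lt_trans ltr01 kappa_gt1.
pose dw := kappa * eps / 4; pose dv := kappa * eps / 8; pose dG := kappa * eps ^+ 2 / 4.
have dw_gt0 : 0 < dw by rewrite divr_gt0 // mulr_gt0.
have dv_gt0 : 0 < dv by rewrite divr_gt0 // mulr_gt0.
have dG_gt0 : 0 < dG by rewrite divr_gt0 // mulr_gt0 // exprn_gt0.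
have D2_ge0 : 0 <= D / 2 by rewrite divr_ge0.
have rG_ge0 : 0 <= rG by rewrite mulr_ge0 ?sqrtr_ge0 // divr_ge0 ?sqr_ge0 // ltW.
have [Nw [cw [Nw_gt0 ln_Nw net_w]]] :=
  @exists_net_ln R 'I_d L dw kappa L_ge0 dw_gt0 kappa_gt1.
have [Nv [cv [Nv_gt0 ln_Nv net_v]]] :=
  @exists_net_ln R 'I_1 (D / 2) dv kappa D2_ge0 dv_gt0 kappa_gt1.
have [NG [cG [NG_gt0 ln_NG net_G]]] :=
  @exists_net_ln R ('I_d * 'I_d)%type rG dG kappa rG_ge0 dG_gt0 kappa_gt1.
have err : dw + dv + Num.sqrt dG <= eps.
  have -> : dG = (17%:R * eps / 32%:R) ^+ 2 by rewrite /dG /kappa; field.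
  rewrite sqrtr_sqr ger0_norm ?divr_ge0 ?mulr_ge0 ?ler0n ?(ltW eps_gt0) // /dw /dv /kappa.
  lra.
pose T : finType := ('I_Nw * 'I_Nv * 'I_NG)%type.
exists #|T|, (fun i => let k := enum_val i in
  Qparam (cw k.1.1) (D / 2 + cv k.1.2 ord0) (cG k.2)); split.
- by rewrite !card_prod !card_ord !muln_gt0 Nw_gt0 Nv_gt0 NG_gt0.
- move=> Q /(Qclass_cover_of_nets net_w net_v net_G err) [k close].
  by exists (enum_rank k) => s a; rewrite enum_rankK; apply: close.
have -> : 1 + 8 * L / eps = 1 + 2 * kappa * L / dw by rewrite /dw; field; rewrite !gt_eqF.
have -> : 1 + 8 * D / eps = 1 + 2 * kappa * (D / 2) / dv.
  by rewrite /dv; field; rewrite !gt_eqF.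
have -> : 1 + 8 * Num.sqrt d%:R * B ^+ 2 / (lam * eps ^+ 2) = 1 + 2 * kappa * rG / dG.
  by rewrite /dG; field; rewrite !gt_eqF // ?exprn_gt0.
rewrite card_ord in ln_Nw; rewrite card_ord mul1r in ln_Nv.
rewrite card_prod card_ord mulnn in ln_NG.
rewrite !card_prod !card_ord [(_ * NG)%:R]natrM [(Nw * _)%:R]natrM.
rewrite !lnM ?posrE ?mulr_gt0 ?ltr0n //.
exact: lerD (lerD ln_Nw ln_Nv) ln_NG.
Qed.

Lemma Vclass_cover (a0 : A) eps n (C : 'I_n -> S -> A -> R) :
  (forall Q, Qclass Q -> exists i, forall s a, `|Q s a - C i s a| <= eps) ->
  exists C5 : 'I_#|{ffun 'I_5 -> 'I_n}| -> S -> R,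
    is_cover (Vclass phi a0 L B D M lam) eps C5.
Proof.
move=> C_cover; pose Ck (f : {ffun 'I_5 -> 'I_n}) (k : nat) := C (f (inord k)).
exists (fun i s => let f := enum_val i in Defs.maxA a0 (fun a =>
  clip (Ck f 0 s a) (Num.max (Ck f 1 s a) (Ck f 2 s a)) (Num.min (Ck f 3 s a) (Ck f 4 s a)))).
move=> _ [Q1 [Q2 [Q3 [Q4 [Q5 [[/C_cover[i1 c1] /C_cover[i2 c2] /C_cover[i3 c3]
  /C_cover[i4 c4] /C_cover[i5 c5]] ->]]]]]].
exists (enum_rank [ffun k : 'I_5 => nth i1 [:: i1; i2; i3; i4; i5] k]) => s.
rewrite enum_rankK; apply: ler_dist_maxA => a; rewrite /Ck !ffunE !inordK //=.
exact: ler_dist_clip.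
Qed.

End Covering.

Theorem lemma18 (R : realType) (S : Type) (A : finType) (a0 : A) (d : nat)
  (phi : S -> A -> 'cV[R]_d)
  (hphi : forall s a, norm2 (phi s a) <= 1)
  (L B D M lam : R) (hL : 0 < L) (hB : 0 < B) (hD : 0 < D) (hM : 0 < M)
  (hlam : 0 < lam) :
  forall eps : R, 0 < eps ->
    log_covering_le (Vclass phi a0 L B D M lam) eps
      (5 * d%:R * ln (1 + 8 * L / eps) + 5 * ln (1 + 8 * D / eps)
       + 5 * (d ^ 2)%:R
           * ln (1 + 8 * Num.sqrt (d%:R) * B ^+ 2 / (lam * eps ^+ 2))).
Proof.
move=> eps eps_gt0.
have [n [C [n_gt0 C_cover ln_n]]] := Qclass_cover hphi B M hlam (ltW hL) (ltW hD) eps_gt0.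
have [C5 V_cover] := Vclass_cover a0 C_cover.
exists _, C5; split => //.
rewrite card_ffun !card_ord natrX lnXn ?ltr0n // -[_ *+ 5]mulr_natl; lra.
Qed.
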